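(* Let $U^{(n)}$ be uniformly distributed on $\{1,\dots,n\}$ and, for $1\le m<n$, put $\widetilde U^{(n,m)}:=\prod_{m<p\le n,\ p\ \text{prime}}p^{\mathbbm{1}_{\{\lambda_p(U^{(n)})\ge1\}}}$. Assume that $m_n>n^{1/2}$ for all sufficiently large $n$ and $m_n=o(n)$ as $n\to\infty$. Then $${\rm Var}\bigl(\log\widetilde U^{(n,m_n)}\bigr)\sim 2^{-1}(\log n-\log m_n)(3\log m_n-\log n),\qquad n\to\infty.$$
   Context: For a prime $p$ and $k\in\mathbb{N}$, $\lambda_p(k)$ is the exponent of $p$ in the prime factorization of $k$. $a_n\sim b_n$ means $a_n/b_n\to1$. *)

From Stdlib Require Import Reals Arith List ZArith Znumtheory.
From Coquelicot Require Import Coquelicot.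
Open Scope R_scope.

Definition primeb (p : nat) : bool :=
  if prime_dec (Z.of_nat p) then true else false.

(* p divides k (p >= 1 here, since p > m >= 0 ranges over primes) *)
Definition dvdb (p k : nat) : bool := Nat.eqb (Nat.modulo k p) 0.

(* log Ũ^{(n,m)} evaluated at the outcome U^{(n)} = k:
   sum over primes m < p <= n with lambda_p(k) >= 1 of log p. *)
Definition logUtilde (n m k : nat) : R :=
  fold_right Rplus 0
    (map (fun p => if andb (primeb p) (dvdb p k) then ln (INR p) else 0)
         (seq (S m) (n - m))).

Definition mean_logUtilde (n m : nat) : R :=
  fold_right Rplus 0 (map (logUtilde n m) (seq 1 n)) / INR n.

Definition var_logUtilde (n m : nat) : R :=
  fold_right Rplus 0
    (map (fun k => (logUtilde n m k - mean_logUtilde n m) ^ 2) (seq 1 n)) / INR n.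

(* Since [m > sqrt n], at most one prime of [(m, n]] divides a given [k <= n], so the
   square of [logUtilde n m k] is the sum of the squares of its terms, and the variance becomes
   [S2/n - (S1/n)^2] with [Sj = sum_(m < p <= n) (ln p)^j * floor(n/p)].  Replacing
   [floor(n/p)/n] by [1/p] costs [O(1)] in [S1/n] and [O(ln n)] in [S2/n] by Chebyshev's
   bound [theta(n) = O(n)].  Mertens' theorem [sum_(p <= x) ln p / p = ln x + O(1)] and
   summation by parts then give [S1/n = L + O(1)] and
   [S2/n = (ln^2 n - ln^2 m)/2 + O(ln n)], where [L = ln n - ln m].  Hence the variance
   is [(ln^2 n - ln^2 m)/2 - L^2 + O(ln n) = L (3 ln m - ln n)/2 + O(ln n)]; since
   [ln n <= 2 ln m], the main term is at least [L ln n / 4], and [L -> oo]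
   because [m = o(n)]. *)

From HB Require Import structures.
From Stdlib Require Import Reals Arith List ZArith Znumtheory Lra Lia.
From Coquelicot Require Import Coquelicot.
From mathcomp Require Import all_boot zify.
Set Implicit Arguments.
Unset Strict Implicit.
Unset Printing Implicit Defensive.
Open Scope R_scope.

HB.instance Definition _ := Monoid.isComLaw.Build R 0 Rplus
  (fun x y z => esym (Rplus_assoc x y z)) Rplus_comm Rplus_0_l.
HB.instance Definition _ := Monoid.isComLaw.Build R 1 Rmult
  (fun x y z => esym (Rmult_assoc x y z)) Rmult_comm Rmult_1_l.
HB.instance Definition _ := Monoid.isMulLaw.Build R 0 Rmult Rmult_0_l Rmult_0_r.
HB.instance Definition _ :=
  Monoid.isAddLaw.Build R Rmult Rplus Rmult_plus_distr_r Rmult_plus_distr_l.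

Lemma fold_right_Rplus_seq (f : nat -> R) a len :
  fold_right Rplus 0 (List.map f (List.seq a len)) =
  \big[Rplus/0]_(a <= i < a + len) f i.
Proof.
elim: len a => [|len IH] a /=; first by rewrite addn0 big_geq.
by rewrite IH [RHS]big_ltn ?addSn ?addnS // ltnS leq_addr.
Qed.

Lemma INR_leq (a b : nat) : (a <= b)%nat -> INR a <= INR b.
Proof. by move/leP; apply: le_INR. Qed.

Lemma INR_ltn (a b : nat) : (a < b)%nat -> INR a < INR b.
Proof. by move/ltP; apply: lt_INR. Qed.

Lemma INR_gt0 (a : nat) : (0 < a)%nat -> 0 < INR a.
Proof. exact: INR_ltn. Qed.

Lemma INR_ge1 (a : nat) : (0 < a)%nat -> 1 <= INR a.
Proof. exact: (@INR_leq 1 a). Qed.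

Lemma INR_expn (p e : nat) : INR (p ^ e) = INR p ^ e.
Proof. by elim: e => [|e IH] //=; rewrite expnS mult_INR IH. Qed.

Lemma INR_sumn (r : seq nat) (P : pred nat) (F : nat -> nat) :
  INR (\sum_(i <- r | P i) F i) = \big[Rplus/0]_(i <- r | P i) INR (F i).
Proof.
elim: r => [|x r IH]; first by rewrite !big_nil.
by rewrite !big_cons; case: (P x); rewrite ?plus_INR IH.
Qed.

Lemma sumR_le_nat (m n : nat) (F G : nat -> R) :
  (forall i, (m <= i < n)%nat -> F i <= G i) ->
  \big[Rplus/0]_(m <= i < n) F i <= \big[Rplus/0]_(m <= i < n) G i.
Proof.
move=> FG; rewrite big_nat_cond [X in _ <= X]big_nat_cond.
apply: (big_ind2 (fun x y => x <= y)) => [|x1 x2 y1 y2|i /andP[/FG //]]; lra.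
Qed.

Lemma sumR_ge0_nat (m n : nat) (F : nat -> R) :
  (forall i, (m <= i < n)%nat -> 0 <= F i) -> 0 <= \big[Rplus/0]_(m <= i < n) F i.
Proof.
move=> F0; rewrite big_nat_cond.
apply: (big_ind (fun x => 0 <= x)) => [|x y|i /andP[/F0 //]]; lra.
Qed.

Lemma sumR_sub (r : seq nat) (P : pred nat) (F G : nat -> R) :
  \big[Rplus/0]_(i <- r | P i) (F i - G i) =
  \big[Rplus/0]_(i <- r | P i) F i - \big[Rplus/0]_(i <- r | P i) G i.
Proof.
elim: r => [|x r IH]; first by rewrite !big_nil; ring.
by rewrite !big_cons; case: (P x); rewrite IH; ring.
Qed.

(* [big_nat_recr] and [big_distrr] restated with [Rplus] and [Rmult] written literally
   instead of as monoid projections, which [lra], [nra] and [ring] cannot see through. *)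
Lemma sumR_nat_recr (m n : nat) (F : nat -> R) : (m <= n)%nat ->
  \big[Rplus/0]_(m <= i < n.+1) F i = \big[Rplus/0]_(m <= i < n) F i + F n.
Proof. by move=> mn; rewrite big_nat_recr. Qed.

Lemma Rmult_sumr (r : seq nat) (P : pred nat) (c : R) (F : nat -> R) :
  c * \big[Rplus/0]_(i <- r | P i) F i = \big[Rplus/0]_(i <- r | P i) (c * F i).
Proof. by rewrite big_distrr. Qed.

Lemma sumR_const_nat (a b : nat) (c : R) :
  \big[Rplus/0]_(a <= i < b) c = INR (b - a) * c.
Proof.
rewrite big_const_nat; elim: (b - a)%nat => [|d IH] /=; first ring.
by rewrite IH; case: d {IH} => [|d] /=; ring.
Qed.

Lemma telescope_sumR (h : nat -> R) m d :
  \big[Rplus/0]_(m <= k < m + d) (h k.+1 - h k) = h (m + d)%nat - h m.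
Proof.
elim: d => [|d IH]; first by rewrite addn0 big_geq //; ring.
by rewrite addnS sumR_nat_recr ?leq_addr // IH; ring.
Qed.

Lemma ln2_gt0 : 0 < ln 2.
Proof. have := ln_lt_2; lra. Qed.

Lemma ln_INR_ge0 (n : nat) : (0 < n)%nat -> 0 <= ln (INR n).
Proof. by move=> /INR_ge1 n1; rewrite -ln_1; apply: ln_le; lra. Qed.

Lemma ln_INR_le (m n : nat) : (0 < m)%nat -> (m <= n)%nat -> ln (INR m) <= ln (INR n).
Proof. by move=> m0 mn; apply: ln_le; [exact: INR_gt0 | exact: INR_leq]. Qed.

Lemma ln_prime_ge0 p : prime p -> 0 <= ln (INR p).
Proof. by move/prime_gt0/ln_INR_ge0. Qed.

Lemma ln_succ_sub_bounds x : 0 < x -> 0 <= ln (x + 1) - ln x <= / x.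
Proof.
move=> x0; have ix0 := Rinv_0_lt_compat x x0.
have -> : ln (x + 1) = ln x + ln (1 + / x).
  by rewrite -ln_mult; try lra; congr ln; field; lra.
have ge0 : 0 <= ln (1 + / x) by rewrite -ln_1; apply: ln_le; lra.
suff : ln (1 + / x) <= / x by lra.
by rewrite -{2}(ln_exp (/ x)); apply: ln_le; [lra | exact: exp_ineq1_le].
Qed.

Lemma ln_INR_succ_sub_bounds k : (0 < k)%nat ->
  0 <= ln (INR k.+1) - ln (INR k) <= 1.
Proof.
move=> /INR_ge1 k1; rewrite S_INR.
have := ln_succ_sub_bounds (x := INR k) ltac:(lra).
suff : / INR k <= 1 by lra.
by rewrite -Rinv_1; apply: Rinv_le_contravar; lra.
Qed.

(** * Chebyshev's bound *)

Lemma ln_prodn (r : seq nat) (P : pred nat) (F : nat -> nat) :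
  (forall i, P i -> 0 < F i)%nat ->
  ln (INR (\prod_(i <- r | P i) F i)) = \big[Rplus/0]_(i <- r | P i) ln (INR (F i)).
Proof.
move=> F0; elim: r => [|x r IH]; first by rewrite !big_nil /= ln_1.
rewrite !big_cons; case Px: (P x) => //.
rewrite mult_INR ln_mult ?IH //; apply: INR_gt0; first exact: F0.
by apply: prodn_cond_gt0 => i; apply: F0.
Qed.

Lemma ln_eq_sum_logn (N B : nat) : (0 < N)%nat -> (N <= B)%nat ->
  ln (INR N) = \big[Rplus/0]_(0 <= p < B.+1) (INR (logn p N) * ln (INR p)).
Proof.
move=> N0 NB; rewrite -{1}(partnT N0) (widen_partn _ NB) ln_prodn ?big_mkcond /=.
  apply: eq_bigr => p _; have := pfactor_gt0 p N; case: (logn p N) => [|e] pe.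
    by rewrite /= ln_1; ring.
  by rewrite INR_expn ln_pow //; apply: INR_gt0; move: pe; rewrite expn_gt0 orbF.
by move=> p _; apply: pfactor_gt0.
Qed.

Lemma logn_ln_ge0 p N : 0 <= INR (logn p N) * ln (INR p).
Proof.
case: p => [|p]; first by rewrite /logn /=; lra.
by apply: Rmult_le_pos; [exact: pos_INR | exact: ln_INR_ge0].
Qed.

Definition theta (n : nat) : R :=
  \big[Rplus/0]_(0 <= p < n.+1) (if prime p then ln (INR p) else 0).

Lemma bin_le_pow2 k a : ('C(k, a) <= 2 ^ k)%nat.
Proof.
elim: k a => [|k IH] [|a] //=; first by rewrite bin0 expn_gt0.
by rewrite binS expnS mul2n -addnn leq_add.
Qed.

Lemma logn_fact_small p n : (n < p)%nat -> logn p n`! = 0%nat.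
Proof.
move=> np; case pp: (prime p); last by rewrite /logn pp.
rewrite logn_fact //; apply: big1_seq => j /andP [_]; rewrite mem_index_iota => /andP [j1 _].
apply: divn_small; apply: (leq_trans np).
by rewrite -{1}(expn1 p) leq_pexp2l // prime_gt0.
Qed.

Lemma logn_fact_ge_div p n : prime p -> (n %/ p <= logn p n`!)%nat.
Proof.
move=> pp; rewrite logn_fact //; case: n => [|n]; first by rewrite div0n.
by rewrite big_ltn // expn1 leq_addr.
Qed.

(* [p] divides [k!] but neither [a!] nor [(k - a)!]. *)
Lemma logn_bin_gt0 p k a : prime p -> (a <= k)%nat -> (a < p)%nat -> (k - a < p)%nat ->
  (p <= k)%nat -> (0 < logn p 'C(k, a))%nat.
Proof.
move=> pp ak ap kap pk.
have := congr1 (logn p) (bin_fact ak).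
rewrite !lognM ?muln_gt0 ?bin_gt0 ?fact_gt0 //.
rewrite (logn_fact_small ap) (logn_fact_small kap) !addn0 => ->.
apply: leq_trans (logn_fact_ge_div k pp).
by rewrite divn_gt0 ?prime_gt0.
Qed.

Lemma ln_bin_le k a : (a <= k)%nat -> ln (INR 'C(k, a)) <= INR k * ln 2.
Proof.
move=> ak; rewrite -ln_pow; last lra.
apply: ln_le; first by apply: INR_gt0; rewrite bin_gt0.
by have := INR_leq (bin_le_pow2 k a); rewrite INR_expn.
Qed.

(* Every prime of the range divides ['C(k, a)]. *)
Lemma sum_ln_primes_bin_le k a : (a <= k)%nat ->
  \big[Rplus/0]_((maxn a (k - a)).+1 <= p < k.+1) (if prime p then ln (INR p) else 0)
  <= INR k * ln 2.
Proof.
move=> ak; set B := maxn a (k - a); set C := 'C(k, a).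
have C0 : (0 < C)%nat by rewrite bin_gt0.
apply: (Rle_trans _ _ _ _ (ln_bin_le ak)).
rewrite (ln_eq_sum_logn C0 (leq_maxl C k)).
have Bk : (B.+1 <= k.+1)%nat by rewrite ltnS geq_max ak leq_subr.
have kC : (k.+1 <= (maxn C k).+1)%nat by rewrite ltnS leq_maxr.
rewrite [X in _ <= X](big_cat_nat _ (n := B.+1)) //=; last lia.
rewrite [X in _ <= _ + X](big_cat_nat _ (n := k.+1)) //=.
have low := @sumR_ge0_nat 0 B.+1 _ (fun i _ => logn_ln_ge0 i C).
have high := @sumR_ge0_nat k.+1 (maxn C k).+1 _ (fun i _ => logn_ln_ge0 i C).
suff : \big[Rplus/0]_(B.+1 <= p < k.+1) (if prime p then ln (INR p) else 0) <=
  \big[Rplus/0]_(B.+1 <= p < k.+1) (INR (logn p C) * ln (INR p)) by lra.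
apply: sumR_le_nat => p /andP [Bp pk]; case pp: (prime p); last exact: logn_ln_ge0.
have /(@INR_leq 1) /= logC : (0 < logn p C)%nat.
  by apply: logn_bin_gt0 => //; move: Bp pk; rewrite /B; lia.
by have := ln_prime_ge0 pp; nra.
Qed.

Lemma theta_le n : theta n <= 4 * ln 2 * INR n.
Proof.
elim/ltn_ind: n => n IH; have l2 := ln2_gt0.
case: (leqP n 1) => [n1|n2].
  have -> : theta n = 0.
    rewrite /theta big1_seq // => p /andP[_]; rewrite mem_index_iota.
    by case: p => [|[|p]] //=; lia.
  by have := pos_INR n; nra.
set a := n %/ 2; have an : (a <= n)%nat by rewrite leq_div.
have mid : maxn a (n - a) = (n - a)%nat by apply/maxn_idPr; lia.
have := sum_ln_primes_bin_le an; rewrite mid => upper.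
have -> : theta n = theta (n - a) +
    \big[Rplus/0]_((n - a).+1 <= p < n.+1) (if prime p then ln (INR p) else 0).
  by rewrite /theta -big_cat_nat //; lia.
have := IH (n - a)%nat ltac:(lia).
have /INR_leq : (4 * (n - a) <= 3 * n)%nat by lia.
rewrite !mult_INR /= => h; nra.
Qed.

(** * Mertens' first theorem *)

Lemma ln_fact_eq_sum n :
  ln (INR n`!) = \big[Rplus/0]_(0 <= p < n.+1) (INR (logn p n`!) * ln (INR p)).
Proof.
rewrite (ln_eq_sum_logn (fact_gt0 n) (leqnn _)).
rewrite (big_cat_nat _ (n := n.+1)) //=; last by rewrite ltnS fact_geq.
rewrite [X in _ + X = _]big1_seq ?Rplus_0_r // => p /andP [_].
by rewrite mem_index_iota => /andP [np _]; rewrite logn_fact_small //= Rmult_0_l.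
Qed.

Lemma ln_fact_bounds n :
  INR n * ln (INR n) - INR n <= ln (INR n`!) <= INR n * ln (INR n).
Proof.
elim: n => [|n IH]; first by rewrite /= ln_1; lra.
rewrite factS mult_INR ln_mult; last (apply: INR_gt0; exact: fact_gt0); last exact: INR_gt0.
case: n IH => [|n] IH; first by rewrite /= !Rmult_1_l ln_1; lra.
rewrite [INR n.+2]S_INR; set x := INR n.+1 in IH *.
have x0 : 0 < x by apply: INR_gt0.
have lx := ln_INR_ge0 (ltn0Sn n); rewrite -/x in lx.
have [inc0 inc1] := ln_succ_sub_bounds x0.
have : x * (ln (x + 1) - ln x) <= 1.
  by apply: (Rle_trans _ (x * / x)); [apply: Rmult_le_compat_l | right; field]; lra.
have := Rmult_le_pos _ _ (Rlt_le _ _ x0) inc0.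
nra.
Qed.

Lemma geometric_sum_mul r J :
  (1 - r) * \big[Rplus/0]_(1 <= j < J.+1) r ^ j = r - r ^ J.+1.
Proof.
elim: J => [|J IH]; first by rewrite big_geq //=; ring.
by rewrite big_nat_recr //= Rmult_plus_distr_l IH /=; ring.
Qed.

Lemma logn_fact_le p n : prime p -> INR (logn p n`!) <= INR n / (INR p - 1).
Proof.
move=> pp; rewrite logn_fact // INR_sumn.
have p1 : 1 < INR p by have /(@INR_ltn 1) := prime_gt1 pp.
set r := / INR p.
have r0 : 0 < r by apply: Rinv_0_lt_compat; lra.
have r1 : r < 1 by rewrite /r -Rinv_1; apply: Rinv_lt_contravar; lra.
apply: (Rle_trans _ (\big[Rplus/0]_(1 <= j < n.+1) (INR n * r ^ j))).
  apply: sumR_le_nat => j _.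
  have pj : 0 < INR p ^ j by apply: pow_lt; lra.
  have := INR_leq (leq_trunc_div n (p ^ j)); rewrite mult_INR INR_expn => h.
  rewrite /r pow_inv; apply: (Rmult_le_reg_r (INR p ^ j)) => //.
  by rewrite Rmult_assoc Rinv_l; lra.
rewrite -big_distrr /= (_ : INR n / (INR p - 1) = INR n * (r / (1 - r))); last first.
  by rewrite /r; field; lra.
apply: Rmult_le_compat_l; first exact: pos_INR.
apply: (Rmult_le_reg_l (1 - r)); first lra.
rewrite geometric_sum_mul (_ : (1 - r) * (r / (1 - r)) = r); last by field; lra.
by have := pow_lt r n.+1 r0; lra.
Qed.

Definition mertens_term (p : nat) : R := if prime p then ln (INR p) / INR p else 0.

Definition mertens_sum (n : nat) : R := \big[Rplus/0]_(0 <= p < n.+1) mertens_term p.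

Definition mertens_const : R := 3 + 4 * ln 2.

(* The extra term [(ln n + 2) / n] dominates the tail of the series, which makes
   the bound provable by induction on [n]. *)
Lemma sum_prime_ln_div_sq_le n : (0 < n)%nat ->
  \big[Rplus/0]_(0 <= p < n.+1)
     (if prime p then ln (INR p) / (INR p * (INR p - 1)) else 0)
  + (ln (INR n) + 2) / INR n <= 2.
Proof.
elim: n => [//|[|n] IH] _.
  by rewrite big_nat_recr //= big_nat1 /= ln_1; lra.
rewrite sumR_nat_recr // [INR n.+2]S_INR; set x := INR n.+1 in IH *.
have x1 : 1 <= x by apply: INR_ge1.
have [inc0 inc1] := ln_succ_sub_bounds (x := x) ltac:(lra).
have lx : 0 <= ln x by apply: ln_INR_ge0.
have new : (if prime n.+2 then ln (x + 1) / ((x + 1) * (x + 1 - 1)) else 0)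
           <= ln (x + 1) / ((x + 1) * x).
  rewrite (_ : x + 1 - 1 = x); last ring.
  case: (prime _); first lra.
  by apply: Rmult_le_pos; [lra | apply/Rlt_le/Rinv_0_lt_compat; nra].
have step : (x + 1) * (ln (x + 1) - ln x) <= 2.
  have : (x + 1) * (ln (x + 1) - ln x) <= (x + 1) * / x by apply: Rmult_le_compat_l; lra.
  suff : (x + 1) * / x <= 2 by lra.
  by apply: (Rmult_le_reg_r x); [lra | rewrite Rmult_assoc Rinv_l; lra].
suff : ln (x + 1) / ((x + 1) * x) + (ln (x + 1) + 2) / (x + 1) <= (ln x + 2) / x
  by have := IH isT; lra.
have gap : (ln x + 2) / x - (ln (x + 1) / ((x + 1) * x) + (ln (x + 1) + 2) / (x + 1))
   = (2 - (x + 1) * (ln (x + 1) - ln x)) / (x * (x + 1)) by field; lra.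
have : 0 <= (2 - (x + 1) * (ln (x + 1) - ln x)) / (x * (x + 1)).
  by apply: Rmult_le_pos; [lra | apply/Rlt_le/Rinv_0_lt_compat; nra].
lra.
Qed.

Lemma mertens_sum_le n : (0 < n)%nat -> mertens_sum n <= ln (INR n) + 4 * ln 2.
Proof.
move=> n0; have x0 := INR_gt0 n0.
have : INR n * mertens_sum n - theta n <= ln (INR n`!).
  rewrite ln_fact_eq_sum /mertens_sum /theta big_distrr /= -sumR_sub.
  apply: sumR_le_nat => p _; rewrite /mertens_term.
  case pp: (prime p); last by rewrite /logn pp /=; lra.
  have p0 := INR_gt0 (prime_gt0 pp); have lp := ln_prime_ge0 pp.
  have low : INR n / INR p - 1 <= INR (logn p n`!).
    apply: Rle_trans (INR_leq (logn_fact_ge_div n pp)).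
    apply: (Rmult_le_reg_r (INR p)) => //.
    have := INR_ltn (ltn_ceil n (prime_gt0 pp)); rewrite mult_INR S_INR.
    by rewrite (_ : (INR n / INR p - 1) * INR p = INR n - INR p); [lra | field; lra].
  rewrite (_ : INR n * (ln (INR p) / INR p) - ln (INR p)
             = (INR n / INR p - 1) * ln (INR p)); last by field; lra.
  exact: Rmult_le_compat_r.
have [_ fact_le] := ln_fact_bounds n; have := theta_le n.
move=> th_le avg; apply: (Rmult_le_reg_l (INR n)) => //; lra.
Qed.

Lemma mertens_sum_ge n : (0 < n)%nat -> ln (INR n) - 3 <= mertens_sum n.
Proof.
move=> n0; have x0 := INR_gt0 n0.
have tail := sum_prime_ln_div_sq_le n0.
have tail0 : 0 <= (ln (INR n) + 2) / INR n.
  by apply: Rmult_le_pos; [have := ln_INR_ge0 n0; lra | exact/Rlt_le/Rinv_0_lt_compat].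
have : ln (INR n`!) <= INR n * (mertens_sum n +
    \big[Rplus/0]_(0 <= p < n.+1)
       (if prime p then ln (INR p) / (INR p * (INR p - 1)) else 0)).
  rewrite ln_fact_eq_sum /mertens_sum -big_split big_distrr /=.
  apply: sumR_le_nat => p _; rewrite /mertens_term.
  case pp: (prime p); last by rewrite /logn pp /=; lra.
  have p1 : 1 < INR p by have /(@INR_ltn 1) := prime_gt1 pp.
  rewrite (_ : INR n * (ln (INR p) / INR p + ln (INR p) / (INR p * (INR p - 1)))
             = INR n / (INR p - 1) * ln (INR p)); last by field; lra.
  exact: Rmult_le_compat_r (ln_prime_ge0 pp) (logn_fact_le n pp).
have [fact_ge _] := ln_fact_bounds n.
move=> avg; apply: (Rmult_le_reg_l (INR n)) => //; nra.
Qed.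

Lemma mertens_sum_err n : (0 < n)%nat ->
  Rabs (mertens_sum n - ln (INR n)) <= mertens_const.
Proof.
move=> n0; have := mertens_sum_le n0; have := mertens_sum_ge n0.
by rewrite /mertens_const => *; apply: Rabs_le; have := ln2_gt0; lra.
Qed.

(** * Summation by parts *)

Lemma abel_summation (a g : nat -> R) m d :
  \big[Rplus/0]_(m.+1 <= k < (m + d).+1) (g k * a k) =
  g (m + d)%nat * \big[Rplus/0]_(0 <= p < (m + d).+1) a p
  - g m * \big[Rplus/0]_(0 <= p < m.+1) a p
  - \big[Rplus/0]_(m <= k < m + d) (\big[Rplus/0]_(0 <= p < k.+1) a p * (g k.+1 - g k)).
Proof.
elim: d => [|d IH]; first by rewrite addn0 big_geq // [\big[Rplus/0]_(m <= k < m) _]big_geq //; ring.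
rewrite addnS sumR_nat_recr ?ltnS ?leq_addr // IH.
rewrite [\big[Rplus/0]_(m <= k < (m + d).+1) _]sumR_nat_recr ?leq_addr //.
by rewrite [\big[Rplus/0]_(0 <= p < (m + d).+2) a p]sumR_nat_recr //; ring.
Qed.

(* Summation by parts against [g] itself, written so that only the error
   [A k - g k] of the approximation of the partial sums [A] by [g] appears. *)
Lemma abel_summation_sq (a g A : nat -> R) m d :
  (forall k, A k = \big[Rplus/0]_(0 <= p < k.+1) a p) ->
  \big[Rplus/0]_(m.+1 <= k < (m + d).+1) (g k * a k)
    - (g (m + d)%nat * g (m + d)%nat - g m * g m) / 2 =
  g (m + d)%nat * (A (m + d)%nat - g (m + d)%nat) - g m * (A m - g m) +
  \big[Rplus/0]_(m <= k < m + d)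
     ((g k.+1 - g k) * (g k.+1 - g k) / 2 - (A k - g k) * (g k.+1 - g k)).
Proof.
move=> HA; rewrite abel_summation -!HA.
under eq_bigr => k _ do rewrite -HA.
have -> : \big[Rplus/0]_(m <= k < m + d)
     ((g k.+1 - g k) * (g k.+1 - g k) / 2 - (A k - g k) * (g k.+1 - g k)) =
  \big[Rplus/0]_(m <= k < m + d) (g k.+1 * g k.+1 / 2 - g k * g k / 2)
  - \big[Rplus/0]_(m <= k < m + d) (A k * (g k.+1 - g k)).
  by rewrite -sumR_sub; apply: eq_bigr => k _; field.
by rewrite (telescope_sumR (fun k => g k * g k / 2)); field.
Qed.

Lemma sum_mertens_term_err n m : (0 < m)%nat -> (m <= n)%nat ->
  Rabs (\big[Rplus/0]_(m.+1 <= p < n.+1) mertens_term p - (ln (INR n) - ln (INR m)))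
  <= 2 * mertens_const.
Proof.
move=> m0 mn.
have -> : \big[Rplus/0]_(m.+1 <= p < n.+1) mertens_term p = mertens_sum n - mertens_sum m.
  by rewrite /mertens_sum (@big_cat_nat _ _ _ m.+1 0 n.+1) //=; ring.
have := mertens_sum_err m0; have := mertens_sum_err (leq_trans m0 mn).
by move=> /Rabs_le_between hn /Rabs_le_between hm; apply: Rabs_le; lra.
Qed.

Lemma sum_ln_mertens_term_err n m : (0 < m)%nat -> (m <= n)%nat ->
  Rabs (\big[Rplus/0]_(m.+1 <= p < n.+1) (ln (INR p) * mertens_term p)
        - (ln (INR n) * ln (INR n) - ln (INR m) * ln (INR m)) / 2)
  <= (3 * mertens_const + 1) * ln (INR n).
Proof.
move=> m0 /subnKC <-; set d := (n - m)%nat.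
rewrite (abel_summation_sq _ _ (A := mertens_sum)) //.
have err k : (0 < k)%nat -> - mertens_const <= mertens_sum k - ln (INR k) <= mertens_const.
  by move/mertens_sum_err/Rabs_le_between.
have inc k : (m <= k)%nat ->
    - mertens_const * (ln (INR k.+1) - ln (INR k)) <=
    (ln (INR k.+1) - ln (INR k)) * (ln (INR k.+1) - ln (INR k)) / 2
      - (mertens_sum k - ln (INR k)) * (ln (INR k.+1) - ln (INR k)) <=
    (mertens_const + 1) * (ln (INR k.+1) - ln (INR k)).
  move=> mk; have k0 := leq_trans m0 mk.
  by have := ln_INR_succ_sub_bounds k0; have := err k k0; nra.
have /sumR_le_nat lo := fun k (hk : (m <= k < m + d)%nat) => proj1 (inc k (proj1 (andP hk))).
have /sumR_le_nat hi := fun k (hk : (m <= k < m + d)%nat) => proj2 (inc k (proj1 (andP hk))).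
rewrite -!Rmult_sumr telescope_sumR in lo hi.
have K0 : 0 <= mertens_const by rewrite /mertens_const; have := ln2_gt0; lra.
have lm := ln_INR_ge0 m0; have mn := ln_INR_le m0 (leq_addr d m).
have [em1 em2] := err _ m0; have [en1 en2] := err _ (leq_trans m0 (leq_addr d m)).
by apply: Rabs_le; split; nra.
Qed.

(** * The variance as a sum over primes *)

Lemma primeb_prime p : primeb p = prime p.
Proof.
rewrite /primeb; case: prime_dec => H; apply/esym.
- apply/primeP; split; first by have := prime_ge_2 _ H; lia.
  move=> d /dvdnP [k Hk].
  have Hd : (Z.of_nat d | Z.of_nat p)%Z.
    by exists (Z.of_nat k); rewrite Hk Nat2Z.inj_mul.
  have [] := prime_divisors _ H _ Hd; lia.
- apply/negP => /primeP [H1 H2]; apply: H; apply/prime_alt; split; first lia.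
  move=> n Hn [k Hk].
  have Hd : (Z.to_nat n %| p)%nat by apply/dvdnP; exists (Z.to_nat k); nia.
  by case/orP: (H2 _ Hd) => /eqP; lia.
Qed.

Lemma dvdb_dvdn p k : (0 < p)%nat -> dvdb p k = (p %| k).
Proof.
move=> p0; rewrite /dvdb /dvdn.
have -> : Nat.modulo k p = k %% p.
  apply/esym/(Nat.mod_unique k p (k %/ p)); have := ltn_pmod k p0; have := divn_eq k p; lia.
by case: Nat.eqb_spec => [->|/eqP/negbTE ->].
Qed.

Lemma logUtilde_eq_sum n m k : (m <= n)%nat ->
  logUtilde n m k =
  \big[Rplus/0]_(m.+1 <= p < n.+1) (if prime p && (p %| k) then ln (INR p) else 0).
Proof.
move=> mn; rewrite /logUtilde fold_right_Rplus_seq (_ : (m.+1 + (n - m))%nat = n.+1); last lia.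
by apply: eq_big_nat => p /andP [mp _]; rewrite primeb_prime dvdb_dvdn //; lia.
Qed.

Lemma sum_sub_mean_sq (x : nat -> R) n : (0 < n)%nat ->
  let mu := \big[Rplus/0]_(1 <= k < n.+1) x k / INR n in
  \big[Rplus/0]_(1 <= k < n.+1) ((x k - mu) ^ 2) / INR n =
  \big[Rplus/0]_(1 <= k < n.+1) (x k * x k) / INR n - mu * mu.
Proof.
move=> /INR_gt0 n0 mu.
have -> : \big[Rplus/0]_(1 <= k < n.+1) ((x k - mu) ^ 2) =
    \big[Rplus/0]_(1 <= k < n.+1) (x k * x k) - 2 * mu * \big[Rplus/0]_(1 <= k < n.+1) x k
    + \big[Rplus/0]_(1 <= k < n.+1) (mu * mu).
  rewrite Rmult_sumr -sumR_sub -big_split /=.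
  by apply: eq_bigr => k _; ring.
by rewrite sumR_const_nat subn1 /= /mu; field; lra.
Qed.

Definition prime_floor_sum (n m : nat) (f : nat -> R) : R :=
  \big[Rplus/0]_(m.+1 <= p < n.+1) (if prime p then f p * INR (n %/ p) else 0).

Lemma sum_dvd_indicator n p (c : R) : (0 < p)%nat ->
  \big[Rplus/0]_(1 <= k < n.+1) (if p %| k then c else 0) = c * INR (n %/ p).
Proof.
move=> p0; rewrite divn_count_dvd INR_sumn Rmult_sumr.
by apply: eq_bigr => k _; case: (p %| k) => /=; ring.
Qed.

Lemma sum_prime_dvd_exchange n m (f : nat -> R) :
  \big[Rplus/0]_(1 <= k < n.+1) \big[Rplus/0]_(m.+1 <= p < n.+1)
      (if prime p && (p %| k) then f p else 0)
  = prime_floor_sum n m f.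
Proof.
rewrite exchange_big /=; apply: eq_big_nat => p /andP [mp _].
case pp: (prime p) => /=; first exact: sum_dvd_indicator (prime_gt0 pp).
by rewrite sumR_const_nat; ring.
Qed.

Lemma sqr_sumR_orthogonal (r : seq nat) (f : nat -> R) : uniq r ->
  (forall i j, i \in r -> j \in r -> i != j -> f i * f j = 0) ->
  \big[Rplus/0]_(i <- r) f i * \big[Rplus/0]_(i <- r) f i =
  \big[Rplus/0]_(i <- r) (f i * f i).
Proof.
move=> ur orth; rewrite big_distrl /=; apply: eq_big_seq => i ir.
rewrite Rmult_sumr (bigD1_seq i) //= big1_seq ?Rplus_0_r // => j /andP [ji jr].
by rewrite orth // eq_sym.
Qed.

(* Since [n < (m+1)^2], at most one prime in [(m, n]] divides a given [k <= n]. *)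
Lemma logUtilde_sq n m k : (1 <= k <= n)%nat -> (m <= n)%nat -> (n < m.+1 * m.+1)%nat ->
  logUtilde n m k * logUtilde n m k =
  \big[Rplus/0]_(m.+1 <= p < n.+1)
     (if prime p && (p %| k) then ln (INR p) * ln (INR p) else 0).
Proof.
move=> /andP [k1 kn] mn nm; rewrite logUtilde_eq_sum // sqr_sumR_orthogonal ?iota_uniq //.
  by apply: eq_bigr => p _; case: (_ && _); ring.
move=> i j; rewrite !mem_index_iota => /andP [mi _] /andP [mj _] ij.
case: (boolP (prime i && (i %| k))) => [/andP [pi di]|]; last by rewrite Rmult_0_l.
case: (boolP (prime j && (j %| k))) => [/andP [pj dj]|]; last by rewrite Rmult_0_r.
have : (i * j <= k)%nat.
  by apply: dvdn_leq => //; rewrite Gauss_dvd ?di ?dj // prime_coprime // dvdn_prime2.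
by have := leq_mul mi mj; lia.
Qed.

Lemma var_logUtilde_eq n m : (0 < n)%nat -> (m <= n)%nat -> (n < m.+1 * m.+1)%nat ->
  var_logUtilde n m =
  prime_floor_sum n m (fun p => ln (INR p) * ln (INR p)) / INR n
  - prime_floor_sum n m (fun p => ln (INR p)) / INR n
    * (prime_floor_sum n m (fun p => ln (INR p)) / INR n).
Proof.
move=> n0 mn nm.
have sum1 : \big[Rplus/0]_(1 <= k < n.+1) logUtilde n m k = prime_floor_sum n m (fun p => ln (INR p)).
  rewrite -sum_prime_dvd_exchange; apply: eq_bigr => k _; exact: logUtilde_eq_sum.
have sum2 : \big[Rplus/0]_(1 <= k < n.+1) (logUtilde n m k * logUtilde n m k) =
    prime_floor_sum n m (fun p => ln (INR p) * ln (INR p)).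
  by rewrite -sum_prime_dvd_exchange; apply: eq_big_nat => k hk; rewrite logUtilde_sq.
have mean : mean_logUtilde n m = \big[Rplus/0]_(1 <= k < n.+1) logUtilde n m k / INR n.
  by rewrite /mean_logUtilde fold_right_Rplus_seq add1n.
rewrite /var_logUtilde mean fold_right_Rplus_seq add1n.
by rewrite (sum_sub_mean_sq (logUtilde n m) n0) sum1 sum2.
Qed.

(** * Asymptotics of the variance *)

Lemma floor_div_sub_bounds n p : (0 < n)%nat -> (0 < p)%nat ->
  - / INR n <= INR (n %/ p) / INR n - / INR p <= 0.
Proof.
move=> /INR_gt0 n0 p0; have pr := INR_gt0 p0.
have lo := INR_ltn (ltn_ceil n p0); have hi := INR_leq (leq_trunc_div n p).
rewrite mult_INR S_INR in lo; rewrite mult_INR in hi.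
have -> : INR (n %/ p) / INR n - / INR p
        = (INR (n %/ p) * INR p - INR n) / (INR n * INR p) by field; lra.
split; last by apply: Rmult_le_0_r; [lra | apply/Rlt_le/Rinv_0_lt_compat; nra].
apply: (Rmult_le_reg_r (INR n * INR p)); first nra.
rewrite /Rdiv Rmult_assoc Rinv_l; last nra.
by rewrite (_ : - / INR n * (INR n * INR p) = - INR p); [lra | field; lra].
Qed.

Lemma prime_floor_sum_approx n m (f : nat -> R) W :
  (0 < n)%nat -> (m <= n)%nat -> 0 <= W ->
  (forall p, prime p -> (p <= n)%nat -> 0 <= f p <= W * ln (INR p)) ->
  Rabs (prime_floor_sum n m f / INR n
        - \big[Rplus/0]_(m.+1 <= p < n.+1) (if prime p then f p / INR p else 0))
  <= 4 * ln 2 * W.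
Proof.
move=> n0 mn W0 fW; have x0 := INR_gt0 n0.
rewrite /prime_floor_sum /Rdiv Rmult_comm Rmult_sumr -sumR_sub.
have lo : \big[Rplus/0]_(m.+1 <= p < n.+1) (- (W * / INR n) * (if prime p then ln (INR p) else 0))
  <= \big[Rplus/0]_(m.+1 <= p < n.+1)
       (/ INR n * (if prime p then f p * INR (n %/ p) else 0)
        - (if prime p then f p * / INR p else 0)).
  apply: sumR_le_nat => p /andP [_ pn]; case pp: (prime p); last lra.
  have [f0 fle] := fW p pp pn; have := floor_div_sub_bounds n0 (prime_gt0 pp).
  have lp := ln_prime_ge0 pp; have ni := Rinv_0_lt_compat _ x0.
  rewrite /Rdiv => - [e1 e2]; nra.
have hi : \big[Rplus/0]_(m.+1 <= p < n.+1)
       (/ INR n * (if prime p then f p * INR (n %/ p) else 0)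
        - (if prime p then f p * / INR p else 0)) <= 0.
  apply: (Rle_trans _ (\big[Rplus/0]_(m.+1 <= p < n.+1) 0)); last by rewrite big1 //; lra.
  apply: sumR_le_nat => p /andP [_ pn]; case pp: (prime p); last lra.
  have [f0 _] := fW p pp pn; have := floor_div_sub_bounds n0 (prime_gt0 pp).
  rewrite /Rdiv => - [_ e2]; nra.
rewrite -Rmult_sumr in lo.
have th : \big[Rplus/0]_(m.+1 <= p < n.+1) (if prime p then ln (INR p) else 0) <= theta n.
  rewrite /theta (@big_cat_nat _ _ _ m.+1 0 n.+1) //=.
  suff : 0 <= \big[Rplus/0]_(0 <= p < m.+1) (if prime p then ln (INR p) else 0) by lra.
  by apply: sumR_ge0_nat => p _; case pp: (prime p); [exact: ln_prime_ge0 | lra].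
have bound : W * / INR n *
    \big[Rplus/0]_(m.+1 <= p < n.+1) (if prime p then ln (INR p) else 0) <= 4 * ln 2 * W.
  rewrite -[X in _ <= X](_ : W * / INR n * (4 * ln 2 * INR n) = _); last by field; lra.
  apply: Rmult_le_compat_l; first by apply: Rmult_le_pos; [lra | exact/Rlt_le/Rinv_0_lt_compat].
  exact: Rle_trans th (theta_le n).
have := Rmult_le_pos _ _ (Rlt_le _ _ ln2_gt0) W0.
by move=> lW; apply: Rabs_le; split; lra.
Qed.

Lemma first_moment_err n m : (0 < m)%nat -> (m <= n)%nat ->
  Rabs (prime_floor_sum n m (fun p => ln (INR p)) / INR n - (ln (INR n) - ln (INR m)))
  <= 2 * mertens_const + 4 * ln 2.
Proof.
move=> m0 mn; have n0 := leq_trans m0 mn.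
have approx := prime_floor_sum_approx (f := fun p => ln (INR p)) n0 mn Rle_0_1
  (fun p pp _ => conj (ln_prime_ge0 pp) (Req_le _ _ (esym (Rmult_1_l _)))).
rewrite Rmult_1_r in approx.
have := sum_mertens_term_err m0 mn; rewrite /mertens_term.
move: approx => /Rabs_le_between approx /Rabs_le_between err.
by apply: Rabs_le; lra.
Qed.

Lemma second_moment_err n m : (0 < m)%nat -> (m <= n)%nat ->
  Rabs (prime_floor_sum n m (fun p => ln (INR p) * ln (INR p)) / INR n
        - (ln (INR n) * ln (INR n) - ln (INR m) * ln (INR m)) / 2)
  <= (3 * mertens_const + 1 + 4 * ln 2) * ln (INR n).
Proof.
move=> m0 mn; have n0 := leq_trans m0 mn.
have fW p : prime p -> (p <= n)%nat ->
    0 <= ln (INR p) * ln (INR p) <= ln (INR n) * ln (INR p).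
  move=> pp pn; have := ln_prime_ge0 pp; have := ln_INR_le (prime_gt0 pp) pn; nra.
have approx := prime_floor_sum_approx n0 mn (ln_INR_ge0 n0) fW.
have := sum_ln_mertens_term_err m0 mn.
rewrite (eq_bigr (fun p => if prime p then ln (INR p) * ln (INR p) / INR p else 0)); last first.
  by move=> p _; rewrite /mertens_term; case: (prime p); rewrite /Rdiv ?Rmult_0_r; ring.
move: approx => /Rabs_le_between approx /Rabs_le_between err.
by apply: Rabs_le; lra.
Qed.

Lemma var_of_moments_err s1 s2 G H a b : 0 <= a -> / 2 <= G -> 0 <= H <= G ->
  Rabs (s1 - (G - H)) <= a -> Rabs (s2 - (G * G - H * H) / 2) <= b * G ->
  Rabs (s2 - s1 * s1 - / 2 * (G - H) * (3 * H - G)) <= (b + 2 * a + 2 * a * a) * G.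
Proof.
move=> a0 G2 [H0 HG] /Rabs_le_between [e1 e2] /Rabs_le_between [f1 f2].
set e := s1 - (G - H) in e1 e2 *.
have -> : s2 - s1 * s1 - / 2 * (G - H) * (3 * H - G)
          = (s2 - (G * G - H * H) / 2) - 2 * (G - H) * e - e * e by rewrite /e; field.
have : (G - H) * Rabs e <= G * a.
  by apply: Rmult_le_compat; [lra | exact: Rabs_pos | lra | apply: Rabs_le; lra].
have : e * e <= 2 * a * a * G.
  have : e * e <= a * a by nra.
  have : 0 <= a * a * (2 * G - 1) by apply: Rmult_le_pos; nra.
  lra.
move=> ee eL; apply: Rabs_le; split_Rabs; nra.
Qed.

Lemma var_logUtilde_err : exists C : R, forall n m : nat,
  (m <= n)%nat -> (n < m * m)%nat ->
  Rabs (var_logUtilde n m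
        - / 2 * (ln (INR n) - ln (INR m)) * (3 * ln (INR m) - ln (INR n)))
  <= C * ln (INR n).
Proof.
set a := 2 * mertens_const + 4 * ln 2; set b := 3 * mertens_const + 1 + 4 * ln 2.
exists (b + 2 * a + 2 * a * a) => n m mn nm.
have m2 : (1 < m)%nat by case: m mn nm => [|[|]] //; lia.
have m0 := ltnW m2; have n0 := leq_trans m0 mn.
rewrite var_logUtilde_eq //; last by apply: (leq_trans nm); apply: leq_mul.
have a0 : 0 <= a by rewrite /a /mertens_const; have := ln2_gt0; lra.
have Gge : / 2 <= ln (INR n).
  have := ln_INR_le (isT : (0 < 2)%nat) (leq_trans m2 mn).
  by rewrite (_ : INR 2 = 2); [have := ln_lt_2; lra | rewrite /=; ring].
apply: var_of_moments_err; [exact: a0 | exact: Gge | | exact: first_moment_err | exact: second_moment_err].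
by split; [exact: ln_INR_ge0 | exact: ln_INR_le].
Qed.

Lemma rel_err_le v G H C : H < G -> G <= 2 * H ->
  let D := / 2 * (G - H) * (3 * H - G) in
  Rabs (v - D) <= C * G -> Rabs (v / D - 1) <= 4 * C / (G - H).
Proof.
move=> HG G2H D err.
have DG : (G - H) * G / 4 <= D by rewrite /D; nra.
have D0 : 0 < D by nra.
rewrite (_ : v / D - 1 = (v - D) / D); last by field; lra.
rewrite Rabs_div ?(Rabs_pos_eq D); try lra.
apply: (Rmult_le_reg_r D) => //; rewrite /Rdiv Rmult_assoc Rinv_l; last lra.
have CG : 0 <= C * G by have := Rabs_pos (v - D); lra.
have C0 : 0 <= C by nra.
rewrite Rmult_1_r; apply: (Rle_trans _ _ _ err).
apply: (Rle_trans _ (4 * C * / (G - H) * ((G - H) * G / 4))); last first.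
  by apply: Rmult_le_compat_l => //; apply: Rmult_le_pos; [lra | apply/Rlt_le/Rinv_0_lt_compat; lra].
by right; field; lra.
Qed.

Lemma eventually_gt0 : eventually (fun n => (0 < n)%nat).
Proof. by exists 1%nat => n /leP. Qed.

Lemma eventually_impl (P Q : nat -> Prop) :
  eventually P -> (forall n, P n -> Q n) -> eventually Q.
Proof. by case=> N HN PQ; exists N => n /HN /PQ. Qed.

Lemma eventually_and (P Q : nat -> Prop) :
  eventually P -> eventually Q -> eventually (fun n => P n /\ Q n).
Proof. exact: filter_and. Qed.

Lemma sqrt_lt_INR_sq n k : sqrt (INR n) < INR k -> (n < k * k)%nat.
Proof.
move=> lt; apply/ltP/INR_lt; rewrite mult_INR -(sqrt_sqrt (INR n)); last exact: pos_INR.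
by have := sqrt_pos (INR n); nra.
Qed.

Lemma eventually_ltn_of_ratio (a : nat -> nat) :
  is_lim_seq (fun n => INR (a n) / INR n) 0 -> eventually (fun n => (a n < n)%nat).
Proof.
move/is_lim_seq_spec => /(_ (mkposreal 1 Rlt_0_1)) small.
apply: (eventually_impl (eventually_and eventually_gt0 small)) => n [n0 /=].
rewrite Rminus_0_r => lt1; apply/ltP/INR_lt; have x0 := INR_gt0 n0.
have := Rle_abs (INR (a n) / INR n) => le.
apply: (Rmult_lt_reg_r (/ INR n)); first exact: Rinv_0_lt_compat.
by rewrite Rinv_r; lra.
Qed.

Lemma is_lim_seq_ln_sub (a : nat -> nat) :
  eventually (fun n => (0 < a n)%nat) ->
  is_lim_seq (fun n => INR (a n) / INR n) 0 ->
  is_lim_seq (fun n => ln (INR n) - ln (INR (a n))) p_infty.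
Proof.
move=> apos /is_lim_seq_spec small; apply/is_lim_seq_spec => M.
have ev := eventually_and eventually_gt0
  (eventually_and apos (small (mkposreal _ (exp_pos (- M))))).
apply: (eventually_impl ev) => n [n0 [a0 /=]].
have x0 := INR_gt0 n0; have y0 := INR_gt0 a0.
rewrite Rminus_0_r Rabs_pos_eq; last by apply/Rlt_le/Rdiv_lt_0_compat.
move/ln_increasing => /(_ (Rdiv_lt_0_compat _ _ y0 x0)).
by rewrite ln_exp ln_div //; lra.
Qed.

Lemma is_lim_seq_rel_err (u L : nat -> R) C :
  is_lim_seq L p_infty ->
  eventually (fun n => Rabs (u n - 1) <= C / L n) ->
  is_lim_seq u 1.
Proof.
move=> HL close.
have small : is_lim_seq (fun n => C / L n) 0.
  have := is_lim_seq_scal_l _ C _ (is_lim_seq_inv _ _ HL ltac:(discriminate)).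
  by rewrite /= Rmult_0_r.
apply: (is_lim_seq_le_le_loc (fun n => 1 - C / L n) _ (fun n => 1 + C / L n)).
- by apply: (eventually_impl close) => n /Rabs_le_between; lra.
- by have := is_lim_seq_minus' _ _ 1 0 (is_lim_seq_const 1) small; rewrite Rminus_0_r.
- by have := is_lim_seq_plus' _ _ 1 0 (is_lim_seq_const 1) small; rewrite Rplus_0_r.
Qed.

Theorem theorem5p5 (m : nat -> nat)
  (Hsqrt : exists N : nat, forall n : nat, le N n -> sqrt (INR n) < INR (m n))
  (Hsmall : is_lim_seq (fun n => INR (m n) / INR n) 0) :
  is_lim_seq
    (fun n => var_logUtilde n (m n) /
       (/ 2 * (ln (INR n) - ln (INR (m n))) * (3 * ln (INR (m n)) - ln (INR n))))
    1.
Proof.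
have sq_lt : eventually (fun n => (n < m n * m n)%nat).
  by case: Hsqrt => N HN; exists N => n /HN /sqrt_lt_INR_sq.
have m_pos : eventually (fun n => (0 < m n)%nat).
  by apply: (eventually_impl sq_lt) => n; case: (m n).
have m_lt := eventually_ltn_of_ratio Hsmall.
have [C err] := var_logUtilde_err.
apply: (is_lim_seq_rel_err (is_lim_seq_ln_sub m_pos Hsmall) (C := 4 * C)).
apply: (eventually_impl (eventually_and sq_lt (eventually_and m_pos m_lt))).
move=> n [nm [m0 mn]].
apply: rel_err_le; last exact: err (ltnW mn) nm.
- by apply: ln_increasing; [exact: INR_gt0 | exact: INR_ltn].
- rewrite -Rplus_diag -ln_mult; try exact: INR_gt0 m0.
  by rewrite -mult_INR; apply: ln_INR_le (ltn_trans m0 mn) (ltnW nm).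
Qed.
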